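(* Let $n$ be a positive integer, $f:\mathbb{Z}_n\to\mathbb C$, $1\le m\le n$ an integer, and $M=\{0,1,\dots,m-1\}\subseteq\mathbb{Z}_n$. Then \[\sum_{a\in\mathbb{Z}_n}\sum_{b\in\mathbb{Z}_n}|f(a+bM)|^2\ge\sum_{r\in\mathbb{Z}_n}|\widehat f(r)|^2\cdot\max\left(\frac{m^2\gcd(r,n)}{n},\,m\right).\]
   Context: The Fourier transform of $f:\mathbb{Z}_n\to\mathbb C$ is $\widehat f(s)=\sum_{x\in\mathbb{Z}_n}f(x)e^{-2\pi i xs/n}$. For $a,b\in\mathbb{Z}_n$, $a+bM$ denotes the multiset $\{a+bx: x\in M\}$ and $f(a+bM)=\sum_{x\in M}f(a+bx)$ (counted with multiplicity). For $r\in\mathbb{Z}_n$, $\gcd(r,n)$ is the gcd of $n$ with any integer representative of $r$ (so $\gcd(0,n)=n$). *)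

From HB Require Import structures.
From mathcomp Require Import all_boot all_order all_algebra.
From mathcomp Require Import reals trigo.
From mathcomp Require Import complex.
Set Implicit Arguments. Unset Strict Implicit. Unset Printing Implicit Defensive.
Import Order.TTheory GRing.Theory Num.Theory.
Local Open Scope ring_scope.
Local Open Scope complex_scope.

(* Z_n is represented by 'I_n (n > 0); a natural number k denotes k mod n. *)
Definition zn_at (R : realType) (n : nat) (f : 'I_n -> R[i]) (k : nat) : R[i] :=
  match @insub nat (fun j => j < n)%N 'I_n (k %% n)%N with
  | Some j => f j
  | None => 0
  end.

Definition expm2pi (R : realType) (t : R) : R[i] :=
  (cos (2 * pi * t)) -i* (sin (2 * pi * t)).

Definition fourier (R : realType) (n : nat) (f : 'I_n -> R[i]) (s : 'I_n) : R[i] :=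
  \sum_(x < n) f x * expm2pi ((x * s)%N%:R / n%:R).

Definition f_line (R : realType) (n : nat) (f : 'I_n -> R[i]) (m : nat)
    (a b : 'I_n) : R[i] :=
  \sum_(x < m) zn_at f (a + b * x)%N.

(* Expanding |f(a + bM)|^2 and summing over a gives correlations
   sum_a f(a + bx) conj f(a + by), which by orthogonality of the additive
   characters of Z_n equal (1/n) sum_s |fhat(s)|^2 e((by - bx)s).  Summing
   over b, orthogonality again turns sum_b e(b(y - x)s) into n [xs = ys in Z_n],
   so the total energy is exactly  sum_s |fhat(s)|^2 N(s), where N(s) counts
   the pairs (x, y) in M^2 with xs = ys in Z_n ([line_energy]).  It remains to
   bound N(s) from below: the diagonal gives N(s) >= m, and since xs = ys as
   soon as x = y mod n/gcd(s, n), the Cauchy-Schwarz inequality on the fibres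
   of x |-> x mod n/gcd(s, n) gives N(s) >= m^2 gcd(s, n) / n. *)

From HB Require Import structures.
From mathcomp Require Import all_boot all_order all_algebra.
From mathcomp Require Import reals trigo.
From mathcomp Require Import complex.
From mathcomp Require Import ring lra zify.
Import Order.TTheory GRing.Theory Num.Theory.
Local Open Scope ring_scope.
Local Open Scope complex_scope.

(* Complex conjugation is a ring morphism; these instances are stated with
   [conjc] itself so that they rewrite the terms of the definitions. *)
Lemma conjcM (R : rcfType) (x y : R[i]) : conjc (x * y) = conjc x * conjc y.
Proof. exact: rmorphM. Qed.

Lemma conjc_sum (R : rcfType) (I : finType) (F : I -> R[i]) :
  conjc (\sum_i F i) = \sum_i conjc (F i).
Proof. exact: rmorph_sum. Qed.

Lemma conjcX (R : rcfType) (x : R[i]) k : conjc (x ^+ k) = conjc x ^+ k.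
Proof. exact: rmorphXn. Qed.

Lemma normcK (R : rcfType) (z : R[i]) : `|z| ^+ 2 = z * conjc z.
Proof. exact: normCK. Qed.

Section Exponential.
Variable R : realType.

Lemma expm2piD (t u : R) : expm2pi (t + u) = expm2pi t * expm2pi u.
Proof.
rewrite /expm2pi mulrDr cosD sinD /=.
by apply/eqP; rewrite eq_complex /=; apply/andP; split; apply/eqP; ring.
Qed.

Lemma expm2pi0 : expm2pi (0 : R) = 1.
Proof. by rewrite /expm2pi mulr0 cos0 sin0 oppr0. Qed.

Lemma expm2pi1 : expm2pi (1 : R) = 1.
Proof. by rewrite /expm2pi mulr1 mulr_natl cos2pi sin2pi oppr0. Qed.

Lemma conj_expm2piK (t : R) : conjc (expm2pi t) * expm2pi t = 1.
Proof.
rewrite /expm2pi /=; apply/eqP; rewrite eq_complex /=; apply/andP; split; apply/eqP.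
  by rewrite -[RHS](cos2Dsin2 (2 * pi * t)); ring.
ring.
Qed.

(* cos(2 pi t) = 1 - 2 sin(pi t)^2 < 1 on the open period (0, 1). *)
Lemma cos2pi_lt1 (t : R) : 0 < t < 1 -> cos (2 * pi * t) < 1.
Proof.
move=> /andP[t_gt0 t_lt1].
have sin_gt0 : 0 < sin (pi * t).
  apply: sin_gt0_pi; rewrite mulr_gt0 ?pi_gt0 //=.
  by rewrite -[ltRHS]mulr1 ltr_pM2l // pi_gt0.
have -> : 2 * pi * t = (pi * t) *+ 2 by rewrite -mulrA mulr_natl.
rewrite cos_mulr2n cos2sin2.
have : 0 < sin (pi * t) ^+ 2 by rewrite exprn_gt0.
lra.
Qed.

End Exponential.

Definition echar (R : realType) (n k : nat) : R[i] := expm2pi ((k%:R : R) / n%:R).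

Section Characters.
Variables (R : realType) (n : nat).
Hypothesis n_gt0 : (0 < n)%N.
Local Notation e := (echar R n).

Lemma echarD k l : e (k + l) = e k * e l.
Proof. by rewrite /echar natrD mulrDl expm2piD. Qed.

Lemma echar0 : e 0 = 1.
Proof. by rewrite /echar mul0r expm2pi0. Qed.

Lemma echarn : e n = 1.
Proof. by rewrite /echar divff ?expm2pi1 // pnatr_eq0 -lt0n. Qed.

Lemma echarM k s : e (k * s) = e k ^+ s.
Proof. by elim: s => [|s IH]; rewrite ?muln0 ?echar0 // mulnS echarD IH exprS. Qed.

Lemma echar_mod k : e k = e (k %% n).
Proof. by rewrite {1}(divn_eq k n) echarD mulnC echarM echarn expr1n mul1r. Qed.

Lemma conj_echar k : conjc (e k) = e (n - k %% n).
Proof.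
have inverse : e k * e (n - k %% n) = 1.
  by rewrite echar_mod -echarD subnKC ?echarn // ltnW // ltn_pmod.
by rewrite -[LHS]mulr1 -inverse mulrA conj_expm2piK mul1r.
Qed.

Lemma echar_neq1 k : ~~ (n %| k)%N -> e k != 1.
Proof.
move=> n_ndvd_k; rewrite echar_mod.
have cos_lt1 : cos (2 * pi * ((k %% n)%:R / n%:R)) < 1 :> R.
  apply: cos2pi_lt1; apply/andP; split.
    by rewrite divr_gt0 ?ltr0n // lt0n.
  by rewrite ltr_pdivrMr ?ltr0n // mul1r ltr_nat ltn_pmod.
by apply/negP => /eqP[] cos_eq1 _; move: cos_lt1; rewrite cos_eq1 ltxx.
Qed.

(* Geometric sum over a full period. *)
Lemma sum_echar k : \sum_(s < n) e (k * s) = if (n %| k)%N then n%:R else 0.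
Proof.
case: ifP => [/dvdnP[q ->]|n_ndvd_k].
  rewrite (eq_bigr (fun _ => 1)) ?sumr_const ?card_ord // => s _.
  by rewrite echar_mod mulnAC modnMl echar0.
under eq_bigr do rewrite echarM.
have : (e k - 1) * \sum_(s < n) e k ^+ s = 0.
  by rewrite -subrX1 -echarM mulnC echarM echarn expr1n subrr.
by move/eqP; rewrite mulf_eq0 subr_eq0 (negbTE (echar_neq1 k (negbT n_ndvd_k))) => /eqP.
Qed.

Lemma echar_orthogonal p q :
  \sum_(s < n) e (p * s) * conjc (e (q * s)) = if p == q %[mod n] then n%:R else 0.
Proof.
under eq_bigr do rewrite echarM (echarM q) conjcX conj_echar -exprMn -echarD -echarM.
have q_le_n : (q %% n <= n)%N by rewrite ltnW // ltn_pmod.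
(* p = q mod n  iff  n divides p + (n - q mod n). *)
have -> : (p == q %[mod n]) = (p == q %% n %[mod n]) by rewrite modn_mod.
by rewrite sum_echar -(eqn_modDr (n - q %% n)) subnKC // modnn.
Qed.

End Characters.

(* Cauchy-Schwarz for a finite sum, from 0 <= sum_(i, j) (F i - F j)^2. *)
Lemma sum_sqr_le (R : realDomainType) (I : finType) (F : I -> R) :
  (\sum_i F i) ^+ 2 <= #|I|%:R * \sum_i F i ^+ 2.
Proof.
set S := \sum_i F i; set Q := \sum_i F i ^+ 2.
have row_sum i : \sum_j (F i - F j) ^+ 2 = #|I|%:R * F i ^+ 2 - (F i * S) *+ 2 + Q.
  under eq_bigr do rewrite sqrrB.
  by rewrite !(big_split, sumrB) /= sumr_const sumrN sumrMnl -mulr_sumr mulr_natl.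
have pair_sum : \sum_i \sum_j (F i - F j) ^+ 2 = (#|I|%:R * Q - S ^+ 2) *+ 2.
  under eq_bigr do rewrite row_sum.
  rewrite !(big_split, sumrB) /= sumr_const sumrN sumrMnl -mulr_suml -mulr_sumr.
  by rewrite -/S -/Q -mulr_natl; ring.
have : 0 <= \sum_i \sum_j (F i - F j) ^+ 2.
  by apply: sumr_ge0 => i _; apply: sumr_ge0 => j _; exact: sqr_ge0.
by rewrite pair_sum pmulrn_lge0 // subr_ge0.
Qed.

(* A map g : I -> J has at least |I|^2 / |J| colliding ordered pairs:
   the collisions are sum_j |g^-1(j)|^2, then apply Cauchy-Schwarz. *)
Lemma card_sqr_le_collisions {I J : finType} (g : I -> J) :
  (#|I| ^ 2 <= #|J| * \sum_x \sum_y (g x == g y))%N.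
Proof.
pose fiber j := #|[set x | g x == j]|.
have sum_fiber : (\sum_j fiber j = #|I|)%N.
  rewrite -sum1_card (partition_big g xpredT) //=.
  by apply: eq_bigr => j _; rewrite sum1dep_card.
have collisions_fiber : (\sum_x \sum_y (g x == g y) = \sum_j fiber j ^ 2)%N.
  have fiber_of x : (\sum_y (g x == g y) = fiber (g x))%N.
    rewrite /fiber -sum1dep_card [RHS]big_mkcond; apply: eq_bigr => y _.
    by rewrite eq_sym; case: eqP.
  under eq_bigr do rewrite fiber_of.
  rewrite (partition_big g xpredT) //=; apply: eq_bigr => j _.
  rewrite (eq_bigr (fun _ => 1 * fiber j)%N) => [|x /eqP <-]; last by rewrite mul1n.
  by rewrite -big_distrl /= sum1dep_card mulnn.
rewrite collisions_fiber -sum_fiber -(@ler_nat rat) natrM natrX !natr_sum.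
under [X in _ <= _ * X]eq_bigr do rewrite natrX.
exact: sum_sqr_le.
Qed.

Definition collisions (n m s : nat) : nat :=
  \sum_(x < m) \sum_(y < m) (y * s == x * s %[mod n]).

(* The diagonal pairs (x, x) alone give m collisions. *)
Lemma diagonal_le_collisions (n m s : nat) : (m <= collisions n m s)%N.
Proof.
rewrite -[X in (X <= _)%N]card_ord -sum1_card.
by apply: leq_sum => x _; rewrite (bigD1 x) //= eqxx.
Qed.

(* With g = gcd(s, n), the products x s and y s agree in Z_n as soon as
   x = y mod n/g; counting collisions of x mod n/g gives m^2 g / n. *)
Lemma gcd_le_collisions (n m s : nat) : (0 < n)%N ->
  (m ^ 2 * gcdn s n <= n * collisions n m s)%N.
Proof.
move=> n_gt0; set g := gcdn s n; set d := (n %/ g)%N.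
have g_gt0 : (0 < g)%N by rewrite gcdn_gt0 n_gt0 orbT.
have n_eq : n = (d * g)%N by rewrite divnK // dvdn_gcdr.
have d_gt0 : (0 < d)%N by move: n_gt0; rewrite n_eq muln_gt0 => /andP[].
have s_eq : s = (s %/ g * g)%N by rewrite divnK // dvdn_gcdl.
pose res (x : 'I_m) : 'I_d := Ordinal (ltn_pmod x d_gt0).
have res_collision x y : res x == res y -> (y * s == x * s %[mod n]).
  rewrite -val_eqE /= => /eqP res_xy.
  by rewrite n_eq s_eq !mulnA -!muln_modl -(modnMml y) -(modnMml x) res_xy.
have := card_sqr_le_collisions res; rewrite !card_ord => res_bound.
apply: (@leq_trans (g * (d * \sum_x \sum_y (res x == res y)))).
  by rewrite mulnC leq_mul2l res_bound orbT.
rewrite mulnA [(g * d)%N]mulnC -n_eq leq_mul2l; apply/orP; right.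
apply: leq_sum => x _; apply: leq_sum => y _.
by case: (res x == res y) / eqP => [/eqP/res_collision ->|].
Qed.

(* Adding c and then "subtracting" it as n - c mod n is the identity mod n. *)
Lemma modn_shift (n a c y : nat) : (0 < n)%N ->
  ((a + c + (y + (n - c %% n))) %% n = (a + y) %% n)%N.
Proof.
move=> n_gt0; have c_lt_n : (c %% n < n)%N by rewrite ltn_pmod.
have -> : (a + c + (y + (n - c %% n)) = (c %/ n).+1 * n + (a + y))%N.
  by rewrite {1}(divn_eq c n) mulSn; lia.
by rewrite modnMDl.
Qed.

Section Correlation.
Variables (R : realType) (n : nat) (f : 'I_n -> R[i]).
Hypothesis n_gt0 : (0 < n)%N.
Local Notation e := (echar R n).

Lemma zn_atE k : zn_at f k = f (Ordinal (ltn_pmod k n_gt0)).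
Proof.
rewrite /zn_at; case: insubP => [u _ u_val|]; last by rewrite ltn_pmod.
by congr f; apply: val_inj; rewrite /= u_val.
Qed.

Lemma zn_at_mod k l : (k %% n = l %% n)%N -> zn_at f k = zn_at f l.
Proof. by move=> kl; rewrite !zn_atE; congr f; apply: val_inj. Qed.

Lemma fourierE (s : 'I_n) : fourier f s = \sum_(u < n) f u * e (u * s).
Proof. by []. Qed.

Lemma correlation_shift (c y : nat) :
  \sum_(a < n) zn_at f (a + c) * conjc (zn_at f (a + y)) =
  \sum_(u < n) f u * conjc (zn_at f (u + (y + (n - c %% n)))).
Proof.
pose shift (a : 'I_n) : 'I_n := Ordinal (ltn_pmod (a + c) n_gt0).
have shift_inj : injective shift.
  move=> a a' /(congr1 val) /= /eqP; rewrite eqn_modDr => /eqP.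
  by rewrite !modn_small // => /val_inj.
rewrite [RHS](reindex_inj shift_inj); apply: eq_bigr => a _.
congr (_ * conjc _); first by rewrite zn_atE.
by apply: zn_at_mod; rewrite /= modnDml modn_shift.
Qed.

(* The same correlation, computed on the Fourier side by orthogonality. *)
Lemma fourier_correlation (c y : nat) :
  \sum_(s < n) (fourier f s * conjc (fourier f s)) * (e (y * s) * conjc (e (c * s))) =
  n%:R * \sum_(u < n) f u * conjc (zn_at f (u + (y + (n - c %% n)))).
Proof.
have expand (s : 'I_n) : (fourier f s * conjc (fourier f s)) * (e (y * s) * conjc (e (c * s)))
    = \sum_(u < n) \sum_(v < n)
        (f u * conjc (f v)) * (e ((u + y) * s) * conjc (e ((v + c) * s))).
  rewrite !fourierE conjc_sum mulr_suml mulr_suml; apply: eq_bigr => u _.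
  rewrite mulr_sumr mulr_suml; apply: eq_bigr => v _.
  by rewrite !mulnDl !echarD !conjcM; ring.
under eq_bigr do rewrite expand.
rewrite exchange_big mulr_sumr; apply: eq_bigr => u _.
rewrite exchange_big /=.
under eq_bigr do rewrite -mulr_sumr echar_orthogonal //.
pose v0 : 'I_n := Ordinal (ltn_pmod (u + (y + (n - c %% n))) n_gt0).
have match_v0 (v : 'I_n) : (u + y == v + c %[mod n]) = (v == v0).
  rewrite -val_eqE /= -[X in _ = (X == _)](modn_small (ltn_ord v)).
  by rewrite -[in RHS](eqn_modDr c) addnAC modn_shift.
rewrite (bigD1 v0) // big1 => [|v /negbTE v_ne]; last by rewrite match_v0 v_ne mulr0.
by rewrite match_v0 eqxx zn_atE Monoid.mulm1 mulrC.
Qed.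

Lemma correlation_spectral (c y : nat) :
  \sum_(a < n) zn_at f (a + c) * conjc (zn_at f (a + y)) =
  n%:R^-1 * \sum_(s < n) (fourier f s * conjc (fourier f s)) * (e (y * s) * conjc (e (c * s))).
Proof. by rewrite fourier_correlation correlation_shift mulKf // pnatr_eq0 -lt0n. Qed.

Lemma line_energy (m : nat) :
  \sum_(a < n) \sum_(b < n) `|f_line f m a b| ^+ 2 =
  \sum_(s < n) `|fourier f s| ^+ 2 * (collisions n m s)%:R.
Proof.
pose P (s : 'I_n) := fourier f s * conjc (fourier f s).
pose E (b x y s : nat) := e (b * y * s) * conjc (e (b * x * s)).
have lhs_expand : \sum_(a < n) \sum_(b < n) `|f_line f m a b| ^+ 2 =
    n%:R^-1 * \sum_(b < n) \sum_(x < m) \sum_(y < m) \sum_(s < n) P s * E b x y s.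
  under eq_bigr do under eq_bigr do rewrite normcK /f_line conjc_sum mulr_suml.
  rewrite exchange_big mulr_sumr; apply: eq_bigr => b _.
  rewrite exchange_big mulr_sumr; apply: eq_bigr => x _.
  under eq_bigr do rewrite mulr_sumr.
  rewrite exchange_big mulr_sumr; apply: eq_bigr => y _.
  exact: correlation_spectral.
have collision_char (s : 'I_n) x y :
    ((y * s == x * s %[mod n]) : nat)%:R = n%:R^-1 * \sum_(b < n) E b x y s.
  under eq_bigr => b _ do rewrite /E -!mulnA !(mulnC b).
  by rewrite echar_orthogonal //; case: ifP; rewrite ?mulr0 ?mulVf ?pnatr_eq0 -?lt0n.
have rhs_expand : \sum_(s < n) `|fourier f s| ^+ 2 * (collisions n m s)%:R =
    n%:R^-1 * \sum_(s < n) \sum_(x < m) \sum_(y < m) \sum_(b < n) P s * E b x y s.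
  rewrite mulr_sumr; apply: eq_bigr => s _.
  rewrite normcK natr_sum !mulr_sumr; apply: eq_bigr => x _.
  rewrite natr_sum !mulr_sumr; apply: eq_bigr => y _.
  by rewrite collision_char mulrCA mulr_sumr.
rewrite lhs_expand rhs_expand; congr (_ * _).
rewrite [LHS]exchange_big [RHS]exchange_big; apply: eq_bigr => x _ /=.
rewrite [LHS]exchange_big [RHS]exchange_big; apply: eq_bigr => y _ /=.
exact: exchange_big.
Qed.

End Correlation.

Theorem lemma4p2 (R : realType) (n : nat) (f : 'I_n -> R[i]) (m : nat)
    (hn : (0 < n)%N) (hm1 : (1 <= m)%N) (hmn : (m <= n)%N) :
  \sum_(a < n) \sum_(b < n) `|f_line f m a b| ^+ 2
  >= \sum_(r < n) `|fourier f r| ^+ 2 *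
       (Num.max ((m ^ 2 * gcdn r n)%N%:R / n%:R) (m%:R : R))%:C.
Proof.
rewrite (line_energy _ _ f hn); apply: ler_sum => r _.
rewrite ler_wpM2l ?exprn_ge0 ?normr_ge0 // -(rmorph_nat (real_complex R)) lecR ge_max.
apply/andP; split.
  rewrite ler_pdivrMr ?ltr0n // -natrM ler_nat [(_ * n)%N]mulnC.
  exact: gcd_le_collisions.
by rewrite (ler_nat R) diagonal_le_collisions.
Qed.
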